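(* Let $X$ be a finite $T_0$-space and $G=\{g_1,\dots,g_m\}$ a finite group with $g_1$ the identity, and suppose $G$ acts freely on $X$ by homeomorphisms. Then (for a suitable labelling of $X$) $X_M$ is a block matrix $(A_{i,j})_{i,j=1,\dots,m}$ with each block $A_{i,j}$ of size $\frac{|X|}{m}\times\frac{|X|}{m}$, such that $A_{i,j}=A_{1,s}$ where $g_s=g_jg_i^{-1}$, for all $i,j=1,\dots,m$.
   Context: A finite $T_0$-space is identified with a finite poset via $x\le y$ iff $U_x\subseteq U_y$, where $U_x$ is the minimal open set containing $x$; homeomorphisms are order automorphisms. For a labelling $X=\{x_1,\dots,x_n\}$, $X_M=(x_{i,j})$ is the $n\times n$ matrix with $x_{i,j}=0$ if $x_i\le x_j$ and $x_{i,j}=1$ otherwise; a different labelling changes $X_M$ to $EX_ME^{-1}$ for a permutation matrix $E$. *)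

From HB Require Import structures.
From mathcomp Require Import all_boot all_order all_algebra all_fingroup.
Set Implicit Arguments. Unset Strict Implicit. Unset Printing Implicit Defensive.

(* A finite T0-space is identified with a finite poset (T, le). *)
Definition is_partial_order (T : finType) (le : rel T) : Prop :=
  [/\ reflexive le, antisymmetric le & transitive le].

Definition XM (T : finType) (le : rel T) (n : nat) (lab : 'I_n -> T) : 'M[nat]_n :=
  \matrix_(a < n, b < n) (if le (lab a) (lab b) then 0%N else 1%N).

(* The (a,b) entry of the (i,j) block (each block of size k x k) of an
   (m*k) x (m*k) matrix: row index i*k+a, column index j*k+b. *)
Definition block_entry (R : Type) (m k : nat) (M : 'M[R]_(m * k))
  (i j : 'I_m) (a b : 'I_k) : R :=
  M (mxvec_index i a) (mxvec_index j b).

(* Freeness makes every orbit a copy of G, so choosing one point r_a in each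
   orbit gives coordinates x = r_a . g_i, i.e. an identification of X with
   G x {orbits}.  Listing X block by block in these coordinates, the entry
   (a, b) of block (i, j) compares r_a . g_i with r_b . g_j; acting by g_i^-1,
   an order automorphism, turns this into the comparison of r_a with
   r_b . (g_j g_i^-1), which is the entry (a, b) of block (1, s). *)
From HB Require Import structures.
From mathcomp Require Import all_boot all_order all_algebra all_fingroup.

Set Implicit Arguments.
Unset Strict Implicit.
Unset Printing Implicit Defensive.

Lemma inj_surj_bij (aT rT : finType) (f : aT -> rT) :
  injective f -> (forall y, exists x, y = f x) -> bijective f.
Proof.
move=> f_inj f_surj; apply: inj_card_bij => //.
rewrite -(card_codom f_inj); apply/subset_leq_card/subsetP => y _.
exact/codomP.
Qed.

Lemma mxvec_labelling (T : finType) (m k : nat) (F : 'I_m * 'I_k -> T) :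
  bijective F ->
  exists2 lab : 'I_(m * k) -> T,
    bijective lab & forall i a, lab (mxvec_index i a) = F (i, a).
Proof.
move=> F_bij; have [h vecK hK] := onT_bij (curry_mxvec_bij m k).
exists (F \o h) => [|i a] /=; last by rewrite (vecK (i, a)).
by apply: bij_comp => //; exists (uncurry (@mxvec_index m k)).
Qed.

Section FreeAction.

Variables (T : finType) (gT : finGroupType) (to : {action gT &-> T}).
Hypothesis to_free : forall (a : gT) (x : T), to x a = x -> a = 1%g.

Lemma free_act_inj (x : T) : injective (to x).
Proof.
move=> a b Eab; have /to_free/eqP : to x (a * b^-1)%g = x.
  by rewrite actM Eab actK.
by rewrite mulg_eq1 invgK => /eqP.
Qed.

Let reps := orbit_transversal to [set: gT] [set: T].

Lemma free_action_coords_bij (I : finType) (g : I -> gT) :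
  bijective g -> bijective (fun p : I * 'I_#|reps| => to (enum_val p.2) (g p.1)).
Proof.
have actsT : [acts [set: gT], on [set: T] | to].
  by apply/actsP => a _ x; rewrite !inE.
have [_ _ reps_orbit_eq reps_meet] := orbit_transversalP actsT.
move=> [g' gK g'K]; apply: inj_surj_bij => [[i a] [j b] /= Eij | y].
  have /enum_val_inj Eab : enum_val a = enum_val b :> T.
    apply/eqP; rewrite -reps_orbit_eq ?enum_valP //.
    by apply/orbitP; exists (g i * (g j)^-1)%g; rewrite ?inE // actM Eij actK.
  by subst b; rewrite (can_inj gK (free_act_inj Eij)).
have [a _ reps_ya] := reps_meet y (in_setT y).
exists (g' a^-1%g, enum_rank_in reps_ya (to y a)).
by rewrite /= enum_rankK_in // g'K actK.
Qed.

End FreeAction.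

Lemma order_act_translate (T : finType) (le : rel T) (gT : finGroupType)
    (to : {action gT &-> T}) :
  (forall (a : gT) (x y : T), le (to x a) (to y a) = le x y) ->
  forall (a b : gT) (x y : T), le (to x a) (to y b) = le x (to y (b * a^-1)%g).
Proof. by move=> to_mono a b x y; rewrite -(to_mono a^-1%g) actK actM. Qed.

Lemma block_entry_XM_orbit_coords (T : finType) (le : rel T)
    (gT : finGroupType) (to : {action gT &-> T})
    (m k : nat) (g : 'I_m -> gT) (i1 : 'I_m) (r : 'I_k -> T)
    (lab : 'I_(m * k) -> T) :
  (forall (a : gT) (x y : T), le (to x a) (to y a) = le x y) ->
  g i1 = 1%g -> (forall i a, lab (mxvec_index i a) = to (r a) (g i)) ->
  forall (i j s : 'I_m), g s = (g j * (g i)^-1)%g -> forall a b : 'I_k,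
    block_entry (XM le lab) i j a b = block_entry (XM le lab) i1 s a b.
Proof.
move=> to_mono g1 labE i j s Es a b.
rewrite /block_entry /XM !mxE !labE g1 act1 Es.
by rewrite (order_act_translate to_mono).
Qed.

Theorem mainTheorem17
  (T : finType) (le : rel T) (gT : finGroupType)
  (to : {action gT &-> T})
  (g : 'I_#|gT| -> gT) (i1 : 'I_#|gT|) :
  is_partial_order le ->
  (* the action is by homeomorphisms = order automorphisms *)
  (forall (a : gT) (x y : T), le (to x a) (to y a) = le x y) ->
  (* the action is free *)
  (forall (a : gT) (x : T), to x a = x -> a = 1%g) ->
  (* G = {g_1, ..., g_m} is an enumeration of G, with g_1 = identity *)
  bijective g -> g i1 = 1%g ->
  exists (k : nat) (lab : 'I_(#|gT| * k) -> T),
    bijective lab /\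
    forall (i j s : 'I_#|gT|), g s = (g j * (g i)^-1)%g ->
      forall a b : 'I_k,
        block_entry (XM le lab) i j a b = block_entry (XM le lab) i1 s a b.
Proof.
move=> _ to_mono to_free g_bij g1.
have [lab lab_bij labE] :=
  mxvec_labelling (free_action_coords_bij to_free g_bij).
exists _, lab; split=> //.
exact: (block_entry_XM_orbit_coords (g := g) to_mono g1 labE).
Qed.
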